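(* Assume the standing setup. For distinct $i,j\in[k]$, $x_{ij}=0$ if and only if $y_{ij}=0$. Equivalently, $s_j\cdot\alpha_i\neq\alpha_i$ if and only if $s_j\cdot\beta_i\neq\beta_i$, so the associated digraphs of $V_1$ and $V_2$ (vertex set $[k]$, arrow $i\to j$ iff $s_j$ does not fix the chosen reflection vector of $s_i$) coincide.
   Context: Standing setup: $\mathbb{F}$ is a field of characteristic $0$; $W$ is a group with finite generating set $S=\{s_1,\dots,s_k\}$. A linear map on a finite-dimensional space is a (generalized) reflection if it is diagonalizable and $s-\operatorname{Id}$ has rank $1$; a reflection vector is a nonzero vector in $\operatorname{Im}(s-\operatorname{Id})$. $(V_1,\rho_1)$, $(V_2,\rho_2)$ are irreducible reflection representations of $(W,S)$ (each $s_i$ acts by a reflection), both of dimension $n$. For each $i\in[k]$, $\alpha_i\in V_1$ is a chosen reflection vector of $s_i$ with $s_i\alpha_i=\lambda_i\alpha_i$ and $\beta_i\in V_2$ a chosen reflection vector of $s_i$ with $s_i\beta_i=\mu_i\beta_i$. $d$ is an integer with $1\le d\le n-1$, and $\psi:\bigwedge^dV_1\to\bigwedge^dV_2$ is an isomorphism of $W$-modules ($W$ acting diagonally). For distinct $a,b\in[k]$, the scalars $x_{ab},y_{ab}\in\mathbb{F}$ are defined by $s_b\cdot\alpha_a=\alpha_a+x_{ab}\alpha_b$ and $s_b\cdot\beta_a=\beta_a+y_{ab}\beta_b$. *)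

From HB Require Import structures.
From mathcomp Require Import all_boot all_order all_algebra.
Set Implicit Arguments.
Unset Strict Implicit.
Unset Printing Implicit Defensive.
Import GRing.Theory.
Local Open Scope ring_scope.

(* Vectors of an n-dimensional F-space are column vectors 'cV[F]_n;
   a representation of the group W is a map rho : W -> 'M[F]_n. *)

Definition generates (W : groupType) (k : nat) (s : 'I_k -> W) : Prop :=
  forall P : W -> Prop,
    P 1%g -> (forall a b, P a -> P b -> P (a * b)%g) ->
    (forall a, P a -> P (a^-1)%g) -> (forall i, P (s i)) -> forall g, P g.

Definition is_rep (F : fieldType) (W : groupType) (n : nat)
  (rho : W -> 'M[F]_n) : Prop :=
  rho 1%g = 1%:M /\ forall g h, rho (g * h)%g = rho g *m rho h.

(* Subspaces are row spaces of matrices U; the subspace {u^T | u in <U>}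
   of column vectors is rho-stable iff U *m (rho g)^T <= U. *)
Definition irreducible_rep (F : fieldType) (W : groupType) (n : nat)
  (rho : W -> 'M[F]_n) : Prop :=
  (0 < n)%N /\
  forall U : 'M[F]_n, (forall g, (U *m (rho g)^T <= U)%MS) ->
    U = 0 \/ row_full U.

Definition is_reflection (F : fieldType) (n : nat) (A : 'M[F]_n) : Prop :=
  diagonalizable A /\ \rank (A - 1%:M) = 1%N.

Definition is_reflection_vector (F : fieldType) (n : nat) (A : 'M[F]_n)
  (v : 'cV[F]_n) : Prop :=
  v != 0 /\ exists u : 'cV[F]_n, v = (A - 1%:M) *m u.

(* Basis of /\^d F^n: e_I = e_{i1} /\ ... /\ e_{id} for d-subsets
   I = {i1 < ... < id} of 'I_n. *)
Definition dsub (n d : nat) := {I : {set 'I_n} | #|I| == d}.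
Definition wdim (n d : nat) := #|{: dsub n d}|.

(* the a-th smallest element of I (if any) *)
Definition set_nth (n : nat) (I : {set 'I_n}) (a : nat) : option 'I_n :=
  nth None (map Some (enum I)) a.

Definition submx_IJ (F : fieldType) (n d : nat) (A : 'M[F]_n)
  (I J : {set 'I_n}) : 'M[F]_d :=
  \matrix_(a < d, b < d)
    match set_nth I a, set_nth J b with
    | Some r, Some c => A r c
    | _, _ => 0
    end.

(* d-th compound matrix: the matrix of /\^d A in the basis (e_I)_I *)
Definition exterior_power (F : fieldType) (n d : nat) (A : 'M[F]_n)
  : 'M[F]_(wdim n d) :=
  \matrix_(i, j) \det (submx_IJ d A (val (enum_val i)) (val (enum_val j))).

From Pilot Require Import Defs.
From HB Require Import structures.
From mathcomp Require Import all_boot all_order all_algebra perm.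
From mathcomp Require Import zify.
Import GRing.Theory.
Local Open Scope ring_scope.
Set Implicit Arguments.
Unset Strict Implicit.
Unset Printing Implicit Defensive.

(* Write the reflection s_i as 1 + alpha_i g_i^T; then x_ij = g_j^T alpha_i, and
   g_i^T alpha_i = lambda_i - 1 is nonzero because s_i is diagonalizable.  The
   property "/\^d s_j fixes a nonzero vector in the image of /\^d s_i - 1" is
   transported by the intertwiner psi, and it holds exactly when x_ij = 0.
   If g_j^T alpha_i = 0, the d-vector alpha_i /\ c_1 /\ ... /\ c_(d-1), with the
   c's independent in the common kernel of g_i^T and g_j^T, is an eigenvector of
   /\^d s_i for lambda_i <> 1 and is fixed by /\^d s_j.  If g_j^T alpha_i <> 0,
   pairing with decomposable d-vectors shows that a vector of the image of
   /\^d s_i - 1 fixed by /\^d s_j is zero.  Only s_i and s_j enter. *)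

Lemma det_mulmx_ffun (R : comPzRingType) k p (C : 'M[R]_(k, p)) (D : 'M[R]_(p, k)) :
  \det (C *m D) = \sum_(f : {ffun 'I_k -> 'I_p})
     (\prod_i C i (f i)) * \det (\matrix_(i, j) D (f i) j).
Proof.
transitivity (\sum_(s : 'S_k) \sum_(f : {ffun 'I_k -> 'I_p})
   (-1) ^+ s * ((\prod_i C i (f i)) * \prod_i D (f i) (s i))).
  apply: eq_bigr => s _; rewrite -big_distrr /=; congr (_ * _).
  under eq_bigr do rewrite mxE.
  rewrite (bigA_distr_bigA (fun i j => C i j * D j (s i))) /=.
  by apply: eq_bigr => f _; rewrite big_split.
rewrite exchange_big; apply: eq_bigr => f _ /=.
rewrite /(\det _) big_distrr /=; apply: eq_bigr => s _.
by rewrite mulrCA; congr (_ * (_ * _)); apply: eq_bigr => i _; rewrite mxE.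
Qed.

Section Subsets.
Variables n' d' : nat.
Local Notation n := n'.+1.
Local Notation d := d'.+1.

Definition set_at (J : {set 'I_n}) (a : 'I_d) : 'I_n := nth ord0 (enum J) a.
Definition set_index (J : {set 'I_n}) (x : 'I_n) : 'I_d := inord (index x (enum J)).

Variable J : {set 'I_n}.
Hypothesis cardJ : #|J| = d.

Lemma set_nthE (a : 'I_d) : Defs.set_nth J a = Some (set_at J a).
Proof. by rewrite /Defs.set_nth (nth_map ord0) // -cardE cardJ. Qed.

Lemma set_at_in (a : 'I_d) : set_at J a \in J.
Proof. by rewrite -mem_enum mem_nth // -cardE cardJ. Qed.

Lemma set_atK : cancel (set_at J) (set_index J).
Proof.
move=> a; rewrite /set_index /set_at index_uniq ?enum_uniq ?inord_val //.
by rewrite -cardE cardJ.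
Qed.

Lemma set_indexK : {in J, cancel (set_index J) (set_at J)}.
Proof.
move=> x xJ; rewrite /set_index /set_at inordK ?nth_index ?mem_enum //.
by rewrite -cardJ cardE index_mem mem_enum.
Qed.

Lemma set_at_inj : injective (set_at J).
Proof. exact: can_inj set_atK. Qed.

End Subsets.

Arguments set_index {n' d'} J x.

Section CauchyBinet.
Variable R : comPzRingType.
Variables n' d' : nat.
Local Notation n := n'.+1.
Local Notation d := d'.+1.

Lemma cauchy_binet (C : 'M[R]_(d, n)) (D : 'M[R]_(n, d)) :
  \det (C *m D) = \sum_(J : dsub n d)
    \det (colsub (set_at (val J)) C) * \det (rowsub (set_at (val J)) D).
Proof.
pose T (f : {ffun 'I_d -> 'I_n}) :=
  (\prod_i C i (f i)) * \det (\matrix_(i, j) D (f i) j).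
have T0 (f : {ffun 'I_d -> 'I_n}) : ~~ injectiveb f -> T f = 0.
  case/injectivePn=> i1 [i2 Di12 Ef12].
  by rewrite /T (determinant_alternate Di12) ?mulr0 // => j; rewrite !mxE Ef12.
rewrite det_mulmx_ffun -/T.
transitivity (\sum_(J : dsub n d)
    \sum_(f : {ffun 'I_d -> 'I_n} | [forall i, f i \in val J]) T f); last first.
  apply: eq_bigr => J _; rewrite -det_mulmx det_mulmx_ffun.
  have cardJ : #|val J| = d by apply/eqP; exact: (valP J).
  symmetry; rewrite (reindex (fun g : {ffun 'I_d -> 'I_d} =>
    [ffun i => set_at (val J) (g i)])) /=.
    apply: eq_big => [g|g _].
      by symmetry; apply/forallP => i; rewrite ffunE set_at_in.
    rewrite /T; congr (_ * _).
      by apply: eq_bigr => i _; rewrite ffunE mxE.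
    by congr (\det _); apply/matrixP => i j; rewrite !mxE ffunE.
  exists (fun f : {ffun 'I_d -> 'I_n} => [ffun i => set_index (val J) (f i)]) => g.
    by move=> _; apply/ffunP => i; rewrite !ffunE set_atK.
  by rewrite inE => /forallP Pg; apply/ffunP => i; rewrite !ffunE set_indexK.
under [RHS]eq_bigr do rewrite big_mkcond /=.
rewrite [RHS]exchange_big; apply: eq_bigr => f _; rewrite -/(T f).
have [->|Tf] := eqVneq (T f) 0; first by rewrite big1 // => J _; case: ifP.
have /injectiveP inj : injectiveb f by apply: contraT => /T0 /eqP; rewrite (negPf Tf).
have cardJ0 : #|f @: [set: 'I_d]| == d by rewrite card_imset // cardsT card_ord.
pose J0 : dsub n d := exist _ (f @: [set: 'I_d]) cardJ0.
rewrite (bigD1 J0) //= ifT; last by apply/forallP => i; apply: imset_f.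
rewrite big1 ?addr0 // => J neJ; case: ifP => // /forallP Pf.
case/eqP: neJ; apply: val_inj => /=; apply/eqP; rewrite eq_sym eqEcard.
rewrite (eqP (valP J)) (eqP cardJ0) leqnn andbT.
by apply/subsetP => x /imsetP [i _ ->].
Qed.

End CauchyBinet.

Section Wedge.
Variable F : fieldType.
Variables n' d' : nat.
Local Notation n := n'.+1.
Local Notation d := d'.+1.
Local Notation wedge_space := 'cV[F]_(wdim n d).

Definition wsub (i : 'I_(wdim n d)) : {set 'I_n} := val (enum_val i).

Lemma card_wsub i : #|wsub i| = d.
Proof. exact/eqP/(valP (enum_val i)). Qed.

Lemma cauchy_binet_ord (C : 'M[F]_(d, n)) (D : 'M[F]_(n, d)) :
  \det (C *m D) = \sum_j
    \det (colsub (set_at (wsub j)) C) * \det (rowsub (set_at (wsub j)) D).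
Proof.
rewrite cauchy_binet.
exact: (big_enum_val (fun J : dsub n d =>
  \det (colsub (set_at (val J)) C) * \det (rowsub (set_at (val J)) D))).
Qed.

(* Pluecker coordinates of v_1 /\ ... /\ v_d, where the v_i are the columns of v. *)
Definition wedge (v : 'M[F]_(n, d)) : wedge_space :=
  \col_i \det (rowsub (set_at (wsub i)) v).

Lemma exterior_powerE (M : 'M[F]_n) i j :
  exterior_power d M i j = \det (mxsub (set_at (wsub i)) (set_at (wsub j)) M : 'M_d).
Proof.
rewrite mxE; congr (\det _); apply/matrixP => a b.
by rewrite !mxE !set_nthE ?card_wsub.
Qed.

Lemma exterior_power_wedge (M : 'M[F]_n) (v : 'M[F]_(n, d)) :
  exterior_power d M *m wedge v = wedge (M *m v).
Proof.
apply/matrixP => i k; rewrite !mxE -mul_rowsub_mx cauchy_binet_ord.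
by apply: eq_bigr => j _; rewrite exterior_powerE mxsubcr mxE.
Qed.

Lemma exterior_power_tr (M : 'M[F]_n) :
  (exterior_power d M)^T = exterior_power d M^T.
Proof.
by apply/matrixP => i j; rewrite mxE !exterior_powerE -det_tr trmx_mxsub.
Qed.

Lemma wedge_tr_mul_exterior_power (M : 'M[F]_n) (v : 'M[F]_(n, d)) :
  (wedge v)^T *m exterior_power d M = (wedge (M^T *m v))^T.
Proof.
by rewrite -[exterior_power d M]trmxK -trmx_mul exterior_power_tr exterior_power_wedge.
Qed.

Lemma wedge_mulmx (v : 'M[F]_(n, d)) (X : 'M[F]_d) :
  wedge (v *m X) = \det X *: wedge v.
Proof. by apply/matrixP => i k; rewrite !mxE -mul_rowsub_mx det_mulmx mulrC. Qed.

Lemma wedge_pairing (u v : 'M[F]_(n, d)) :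
  ((wedge u)^T *m wedge v) 0 0 = \det (u^T *m v).
Proof.
rewrite !mxE cauchy_binet_ord.
by apply: eq_bigr => j _; rewrite !mxE -det_tr trmx_mxsub.
Qed.

Lemma wedge_delta i : exists v, wedge v = delta_mx i (0 : 'I_1).
Proof.
exists (\matrix_(r, b) (r == set_at (wsub i) b)%:R).
apply/matrixP => j k; rewrite (ord1 k) !mxE eqxx andbT.
have [->|nji] := eqVneq j i.
  rewrite -[RHS](det1 _ d); congr (\det _); apply/matrixP => a b.
  by rewrite !mxE (inj_eq (set_at_inj (card_wsub i))).
have [a aI] : exists a : 'I_d, set_at (wsub j) a \notin wsub i.
  apply/existsP; apply: contraR nji; rewrite negb_exists => /forallP hall.
  suff eJ : wsub j = wsub i by apply/eqP/enum_val_inj/val_inj.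
  apply/eqP; rewrite eqEcard !card_wsub leqnn andbT; apply/subsetP => x xj.
  have := hall (set_index (wsub j) x).
  by rewrite (set_indexK (card_wsub j) xj) negbK.
rewrite (expand_det_row _ a) big1 // => b _; rewrite !mxE.
by case: eqP => [e|]; [move: aI; rewrite e set_at_in ?card_wsub | rewrite mul0r].
Qed.

Lemma wedge_orth_eq0 (w : wedge_space) :
  (forall v, (wedge v)^T *m w = 0) -> w = 0.
Proof.
move=> w_perp; apply/matrixP => j k; rewrite (ord1 k) mxE.
have [v ev] := wedge_delta j; move/matrixP: (w_perp v) => /(_ 0 0).
rewrite ev !mxE (bigD1 j) //= big1 ?addr0 => [|i nij]; last first.
  by rewrite !mxE (negPf nij) mul0r.
by rewrite !mxE !eqxx mul1r.
Qed.

Lemma wedge_row_mx_linear c (x y : 'cV[F]_n) (V : 'M[F]_(n, d')) :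
  wedge (row_mx (c *: x + y) V) = c *: wedge (row_mx x V) + wedge (row_mx y V).
Proof.
apply/matrixP => i k; rewrite !mxE -!(det_tr (rowsub _ _)) -[X in _ = _ + X]mul1r.
apply: (determinant_multilinear (i0 := ord0)).
- apply/rowP => b; rewrite !mxE; case: splitP => [j _|j]; first by rewrite !mxE mul1r.
  by move/eqP.
- by apply/matrixP => a b; rewrite !mxE; case: splitP => [j|j _] //; rewrite lift0 ord1.
- by apply/matrixP => a b; rewrite !mxE; case: splitP => [j|j _] //; rewrite lift0 ord1.
Qed.

End Wedge.

Section FixedInImage.
Variables (F : fieldType) (N : nat).
Implicit Types X Y Q : 'M[F]_N.

Definition fixed_in_image X Y : Prop :=
  exists w : 'cV[F]_N, [/\ w != 0, exists u, w = (X - 1%:M) *m u & Y *m w = w].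

Lemma fixed_in_image_conj Q X1 X2 Y1 Y2 :
  Q \in unitmx -> Q *m X1 = X2 *m Q -> Q *m Y1 = Y2 *m Q ->
  fixed_in_image X1 Y1 -> fixed_in_image X2 Y2.
Proof.
move=> Qu QX QY [w [wnz [u w_im] Yw]]; exists (Q *m w); split.
- by apply: contraNneq wnz => /(congr1 (mulmx (invmx Q))); rewrite mulKmx // mulmx0 => ->.
- by exists (Q *m u); rewrite w_im !mulmxA mulmxBr mulmx1 QX !mulmxBl mul1mx.
- by rewrite mulmxA -QY -mulmxA Yw.
Qed.

Lemma fixed_in_image_similar Q X1 X2 Y1 Y2 :
  Q \in unitmx -> Q *m X1 = X2 *m Q -> Q *m Y1 = Y2 *m Q ->
  fixed_in_image X1 Y1 <-> fixed_in_image X2 Y2.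
Proof.
move=> Qu QX QY; split; first exact: fixed_in_image_conj QX QY.
have invQ Z1 Z2 : Q *m Z1 = Z2 *m Q -> invmx Q *m Z2 = Z1 *m invmx Q.
  by move=> QZ; apply: (canRL (mulmxK Qu)); rewrite -mulmxA -QZ mulKmx.
by apply: fixed_in_image_conj (invQ _ _ QX) (invQ _ _ QY); rewrite unitmx_inv.
Qed.

End FixedInImage.

Section Reflections.
Variables (F : fieldType) (n : nat).

Lemma diagonalizable_sqr_sub_ker (A : 'M[F]_n) (c : F) (u : 'cV[F]_n) :
  diagonalizable A -> (A - c%:M) *m ((A - c%:M) *m u) = 0 -> (A - c%:M) *m u = 0.
Proof.
case=> P Pu /(similar_diagLR Pu) [D eA].
pose e := D - const_mx c.
have eAc : A - c%:M = invmx P *m diag_mx e *m P.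
  rewrite eA conjVmx // /e linearB /= diag_const_mx mulmxBr mulmxBl.
  by rewrite scalar_mxC mulmxKV.
rewrite eAc -!mulmxA mulKVmx // => /(congr1 (mulmx P)); rewrite mulKVmx // mulmx0.
move=> ee0; suff -> : diag_mx e *m (P *m u) = 0 by rewrite !mulmx0.
apply/matrixP => i j; move/matrixP/(_ i j): ee0; rewrite !mul_diag_mx !mxE.
by move/eqP; rewrite mulf_eq0 => /orP [/eqP -> | /eqP //]; rewrite mul0r.
Qed.

Lemma reflection_rank_one (A : 'M[F]_n) (a : 'cV[F]_n) :
  is_reflection A -> is_reflection_vector A a ->
  exists2 g : 'cV[F]_n, A = 1%:M + a *m g^T & (g^T *m a) 0 0 != 0.
Proof.
move=> [diagA rk1] [anz [u a_im]].
have a_rowN : (a^T <= (A - 1%:M)^T)%MS by rewrite a_im trmx_mul submxMl.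
have aT_rank : \rank a^T = 1%N by rewrite rank_rV trmx_eq0 anz.
have /submxP [g eN] : ((A - 1%:M)^T <= a^T)%MS.
  by rewrite -(mxrank_leqif_sup a_rowN).2 aT_rank mxrank_tr rk1.
have eA : A = 1%:M + a *m g^T.
  by rewrite -[a]trmxK -trmx_mul -eN trmxK addrC subrK.
exists g => //; apply: contra anz => /eqP ga0.
have NN : (A - 1%:M) *m ((A - 1%:M) *m u) = 0.
  rewrite {1 2}eA addrC addKr -!mulmxA (mulmxA g^T) [g^T *m a]mx11_scalar ga0.
  by rewrite raddf0 !(mul0mx, mulmx0).
by rewrite a_im (diagonalizable_sqr_sub_ker diagA NN).
Qed.

End Reflections.

Lemma cV_dotC (F : fieldType) n (u v : 'cV[F]_n) : (u^T *m v) 0 0 = (v^T *m u) 0 0.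
Proof. by rewrite !mxE; apply: eq_bigr => k _; rewrite !mxE mulrC. Qed.

Lemma common_kernel_free (F : fieldType) n m (g h : 'cV[F]_n) : (m.+2 <= n)%N ->
  exists2 C : 'M[F]_(n, m), g^T *m C = 0 /\ h^T *m C = 0 & row_free C^T.
Proof.
move=> mn; pose K := kermx (row_mx g h).
have rK : (m <= \rank K)%N by rewrite mxrank_ker; have := rank_leq_col (row_mx g h); lia.
pose Ct : 'M[F]_(m, n) := pid_mx m *m row_base K.
have /sub_kermxP : (Ct <= K)%MS by rewrite (submx_trans (submxMl _ _)) ?eq_row_base.
rewrite mul_mx_row -row_mx0 => /eq_row_mx [Cg Ch].
exists Ct^T; first by rewrite -!trmx_mul Cg Ch !trmx0.
by rewrite trmxK /row_free mxrankMfree ?row_base_free // rank_pid_mx.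
Qed.

Section WedgeReflections.
Variable F : fieldType.
Variables n' d' : nat.
Local Notation n := n'.+1.
Local Notation d := d'.+1.
Local Notation E := (@exterior_power F n d).

Lemma wedge_orth_eq0_hyperplane (a h : 'cV[F]_n) (w : 'cV[F]_(wdim n d)) :
  (a^T *m h) 0 0 != 0 ->
  (forall v : 'M[F]_(n, d), a^T *m v = 0 -> (wedge v)^T *m w = 0) ->
  (forall V : 'M[F]_(n, d'), a^T *m V = 0 -> (wedge (row_mx h V))^T *m w = 0) ->
  w = 0.
Proof.
move=> ah orth_w orth_hw; apply: wedge_orth_eq0 => v.
(* Column operations turn a^T v into (r, 0, ..., 0); then split the first
   column along h and ker a^T. *)
pose X := invmx (row_ebase (a^T *m v)).
have Xu : X \in unitmx by rewrite unitmx_inv row_ebase_unit.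
suff : (wedge (v *m X))^T *m w = 0.
  rewrite wedge_mulmx linearZ /= -scalemxAl => /eqP; rewrite scaler_eq0.
  by case/orP => [/eqP dX0|/eqP //]; move: Xu; rewrite unitmxE unitfE dX0 eqxx.
have aTvX : a^T *m (v *m X) = col_ebase (a^T *m v) *m pid_mx (\rank (a^T *m v)).
  by rewrite mulmxA /X -{1}(mulmx_ebase (a^T *m v)) mulmxK ?row_ebase_unit.
rewrite -[v *m X](@hsubmxK _ _ 1 d'); set v0 := lsubmx _; set V := rsubmx _.
have aV : a^T *m V = 0.
  rewrite /V mulmx_rsub aTvX; apply/matrixP => i j; rewrite !mxE big1 // => l _.
  by rewrite !mxE (ord1 l) /= mulr0n mulr0.
pose t := (a^T *m v0) 0 0 / (a^T *m h) 0 0.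
rewrite -[v0](subrK (t *: h)) addrC wedge_row_mx_linear raddfD /= linearZ /=.
rewrite mulmxDl -scalemxAl orth_hw // orth_w ?scaler0 ?addr0 //.
rewrite (mul_mx_row a^T (v0 - t *: h) V) aV mulmxBr -scalemxAr.
rewrite [a^T *m v0]mx11_scalar [a^T *m h]mx11_scalar scale_scalar_mx divfK //.
by rewrite subrr row_mx0.
Qed.

Lemma wedge_not_fixed_in_image (a g b h : 'cV[F]_n) :
  (h^T *m b) 0 0 != 0 -> (h^T *m a) 0 0 != 0 ->
  ~ fixed_in_image (E (1%:M + a *m g^T)) (E (1%:M + b *m h^T)).
Proof.
move=> hb ha [w [wnz [u w_im] Bw]]; move/negP: wnz; apply; apply/eqP.
apply: (wedge_orth_eq0_hyperplane (a := a) (h := h)); first by rewrite cV_dotC.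
  move=> v av0; have Atv : (1%:M + a *m g^T)^T *m v = v.
    rewrite raddfD /= trmx1 trmx_mul trmxK mulmxDl mul1mx.
    by rewrite -mulmxA av0 mulmx0 addr0.
  by rewrite w_im mulmxA mulmxBr mulmx1 wedge_tr_mul_exterior_power Atv subrr mul0mx.
move=> V _; set u1 := row_mx h V.
pose mu := 1 + (b^T *m h) 0 0.
have Bu1 : (1%:M + b *m h^T)^T *m u1 = u1 *m block_mx mu%:M (b^T *m V) 0 1%:M.
  rewrite raddfD /= trmx1 trmx_mul trmxK mulmxDl mul1mx -mulmxA /u1.
  rewrite mul_mx_row mul_row_block mul_mx_row add_row_mx !mulmx0 !mulmx1 !addr0.
  rewrite [b^T *m h]mx11_scalar mul_mx_scalar mul_mx_scalar /mu scalerDl scale1r.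
  by rewrite [V + _]addrC.
have := congr1 (mulmx (wedge u1)^T) Bw.
rewrite mulmxA wedge_tr_mul_exterior_power Bu1 wedge_mulmx linearZ /= -scalemxAl.
rewrite (@det_ublock _ 1 d' mu%:M (b^T *m V) 1%:M) det_scalar1 det1 mulr1 => /eqP.
rewrite -subr_eq0 -{2}[(wedge u1)^T *m w]scale1r -scalerBl scaler_eq0.
by rewrite /mu [1 + _]addrC addrK cV_dotC (negPf hb) => /eqP.
Qed.

Lemma wedge_fixed_in_image (a g b h : 'cV[F]_n) :
  (d < n)%N -> (g^T *m a) 0 0 != 0 -> h^T *m a = 0 ->
  fixed_in_image (E (1%:M + a *m g^T)) (E (1%:M + b *m h^T)).
Proof.
move=> dn ga ha; have [C [gC hC] /row_freeP [D DC]] := common_kernel_free g h dn.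
pose v : 'M[F]_(n, 1 + d') := row_mx a C.
pose lam := 1 + (g^T *m a) 0 0.
have Av : (1%:M + a *m g^T) *m v = v *m block_mx lam%:M 0 0 1%:M.
  rewrite mulmxDl mul1mx -mulmxA /v mul_mx_row gC mul_mx_row mul_row_block.
  rewrite add_row_mx !mulmx0 !mulmx1 !addr0 add0r [g^T *m a]mx11_scalar.
  by rewrite mul_mx_scalar mul_mx_scalar /lam scalerDl scale1r.
have Bv : (1%:M + b *m h^T) *m v = v.
  by rewrite mulmxDl mul1mx -mulmxA /v mul_mx_row ha hC row_mx0 mulmx0 addr0.
exists (wedge v); split.
- apply/eqP => v0; have := wedge_pairing (row_mx g D) v.
  rewrite v0 mulmx0 mxE (tr_row_mx g D) (mul_col_row g^T D^T a C) gC.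
  rewrite (@det_lblock _ 1 d' (g^T *m a) (D^T *m a) (D^T *m C)).
  rewrite -[D^T *m C]trmxK trmx_mul trmxK DC trmx1 det1 mulr1 det_mx11.
  by move/esym/eqP; rewrite (negPf ga).
- exists ((lam - 1)^-1 *: wedge v).
  rewrite -scalemxAr mulmxBl mul1mx exterior_power_wedge Av wedge_mulmx.
  rewrite (@det_ublock _ 1 d' lam%:M 0 1%:M) det_scalar1 det1 mulr1.
  rewrite -[X in lam *: _ - X]scale1r -scalerBl scalerA mulVf ?scale1r //.
  by rewrite /lam [1 + _]addrC addrK.
- by rewrite exterior_power_wedge Bv.
Qed.

Lemma reflection_coeff_eq0_iff (Ai Aj : 'M[F]_n) (ai aj : 'cV[F]_n) (x : F) :
  (d < n)%N ->
  is_reflection Ai -> is_reflection_vector Ai ai ->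
  is_reflection Aj -> is_reflection_vector Aj aj ->
  Aj *m ai = ai + x *: aj ->
  x = 0 <-> fixed_in_image (E Ai) (E Aj).
Proof.
move=> dn rAi rai rAj raj Aj_ai.
have [gi -> gi_ai] := reflection_rank_one rAi rai.
have [gj eAj gj_aj] := reflection_rank_one rAj raj.
have gj_ai : (gj^T *m ai) 0 0 = x.
  have ajnz : aj != 0 by case: raj.
  move: Aj_ai; rewrite eAj mulmxDl mul1mx -mulmxA {1}[gj^T *m ai]mx11_scalar.
  rewrite mul_mx_scalar => /addrI/eqP; rewrite -subr_eq0 -scalerBl scaler_eq0.
  by rewrite (negPf ajnz) orbF subr_eq0 => /eqP.
rewrite eAj; split => [x0 | fixed].
  by apply: wedge_fixed_in_image; rewrite // [gj^T *m ai]mx11_scalar gj_ai x0 raddf0.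
apply/eqP/contraT; rewrite -gj_ai => gj_ai0.
by case: (wedge_not_fixed_in_image gj_aj gj_ai0 fixed).
Qed.

End WedgeReflections.

Theorem corollary5p10
  (F : fieldType) (hchar : [pchar F] =i pred0)
  (W : groupType) (k : nat) (s : 'I_k -> W) (hgen : generates s)
  (n : nat)
  (rho1 rho2 : W -> 'M[F]_n)
  (hrep1 : is_rep rho1) (hrep2 : is_rep rho2)
  (hirr1 : irreducible_rep rho1) (hirr2 : irreducible_rep rho2)
  (hrefl1 : forall i, is_reflection (rho1 (s i)))
  (hrefl2 : forall i, is_reflection (rho2 (s i)))
  (alpha beta : 'I_k -> 'cV[F]_n) (lambda mu : 'I_k -> F)
  (halpha : forall i, is_reflection_vector (rho1 (s i)) (alpha i))
  (hbeta : forall i, is_reflection_vector (rho2 (s i)) (beta i))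
  (hlambda : forall i, rho1 (s i) *m alpha i = lambda i *: alpha i)
  (hmu : forall i, rho2 (s i) *m beta i = mu i *: beta i)
  (d : nat) (hd1 : (1 <= d)%N) (hd2 : (d <= n - 1)%N)
  (psi : 'M[F]_(wdim n d)) (hpsi_inv : psi \in unitmx)
  (hpsi_W : forall g : W,
      psi *m exterior_power d (rho1 g) = exterior_power d (rho2 g) *m psi)
  (x y : 'I_k -> 'I_k -> F)
  (hx : forall a b, a != b ->
      rho1 (s b) *m alpha a = alpha a + x a b *: alpha b)
  (hy : forall a b, a != b ->
      rho2 (s b) *m beta a = beta a + y a b *: beta b) :
  forall i j : 'I_k, i != j ->
    (x i j = 0 <-> y i j = 0) /\
    (rho1 (s j) *m alpha i != alpha i <-> rho2 (s j) *m beta i != beta i).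
Proof.
move=> i j ij.
have [n' en] : exists n', n = n'.+1 by exists n.-1; lia.
have [d' ed] : exists d', d = d'.+1 by exists d.-1; lia.
subst n d; have dn : (d'.+1 < n'.+1)%N by lia.
have x_iff := reflection_coeff_eq0_iff dn (hrefl1 i) (halpha i) (hrefl1 j) (halpha j)
  (hx _ _ ij).
have y_iff := reflection_coeff_eq0_iff dn (hrefl2 i) (hbeta i) (hrefl2 j) (hbeta j)
  (hy _ _ ij).
have psi_iff := fixed_in_image_similar hpsi_inv (hpsi_W (s i)) (hpsi_W (s j)).
have xy : x i j = 0 <-> y i j = 0 by rewrite x_iff psi_iff y_iff.
have add_scale_neq (c : F) (u v : 'cV[F]_n'.+1) : v != 0 -> (u + c *: v != u) = (c != 0).
  by move=> vnz; rewrite -subr_eq0 addrAC subrr add0r scaler_eq0 (negPf vnz) orbF.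
rewrite (hx _ _ ij) (hy _ _ ij) !add_scale_neq; first last.
- by case: (halpha j).
- by case: (hbeta j).
by split=> //; split=> /eqP nz; apply/eqP => z; apply: nz; apply/xy.
Qed.
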